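(* Let $A$ be a nilpotent non-abelian finite-dimensional Leibniz algebra over a field whose center $Z_1(A)=\{z\in A: zA=Az=0\}$ is one-dimensional. Then there is no nilpotent Leibniz algebra $N$ and integer $i\ge 2$ with $A=N^i$.
   Context: A (left) Leibniz algebra is an algebra satisfying $x(yz)=(xy)z+y(xz)$ for all $x,y,z$. The lower central series of $N$ is $N^1=N$, $N^{j+1}=NN^j$; $N$ is nilpotent if $N^t=0$ for some $t$. $A$ is abelian if $AA=0$. *)

From HB Require Import structures.
From mathcomp Require Import all_boot all_order all_algebra.
Set Implicit Arguments. Unset Strict Implicit. Unset Printing Implicit Defensive.
Import GRing.Theory.
Local Open Scope ring_scope.

Definition leibniz_alg (K : fieldType) (V : lmodType K) (mul : V -> V -> V) : Prop :=
  [/\ (forall (a : K) x y z, mul (a *: x + y) z = a *: mul x z + mul y z),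
      (forall (a : K) x y z, mul x (a *: y + z) = a *: mul x y + mul x z)
    & (forall x y z, mul x (mul y z) = mul (mul x y) z + mul y (mul x z))].

(* Lower central series: lcs mul j x  <->  x \in N^j (j >= 1),
   N^1 = N, N^(j+1) = span { x y : x \in N, y \in N^j }. *)
Inductive lcs (K : fieldType) (V : lmodType K) (mul : V -> V -> V) : nat -> V -> Prop :=
| lcs_one x : lcs mul 1 x
| lcs_mul j x y : lcs mul j y -> lcs mul j.+1 (mul x y)
| lcs_zero j : lcs mul j.+1 0
| lcs_add j x y : lcs mul j.+1 x -> lcs mul j.+1 y -> lcs mul j.+1 (x + y)
| lcs_scale j (a : K) x : lcs mul j.+1 x -> lcs mul j.+1 (a *: x).

Definition nilpotent_alg (K : fieldType) (V : lmodType K) (mul : V -> V -> V) : Prop :=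
  exists t : nat, forall x, lcs mul t.+1 x -> x = 0.

Definition abelian_alg (K : fieldType) (V : lmodType K) (mul : V -> V -> V) : Prop :=
  forall x y, mul x y = 0.

Definition central (K : fieldType) (V : lmodType K) (mul : V -> V -> V) (z : V) : Prop :=
  forall x, mul z x = 0 /\ mul x z = 0.

Definition center_dim1 (K : fieldType) (V : lmodType K) (mul : V -> V -> V) : Prop :=
  exists2 z : V, z != 0 & forall x, central mul x <-> exists c : K, x = c *: z.

(* (A, mulA) is isomorphic, as an algebra, to N^i with the restricted product:
   there is an injective linear multiplicative map f : A -> N with image N^i. *)
Definition iso_to_lcs (K : fieldType) (A : lmodType K) (mulA : A -> A -> A)
    (N : lmodType K) (mulN : N -> N -> N) (i : nat) : Prop :=
  exists f : A -> N,
    [/\ (forall (a : K) x y, f (a *: x + y) = a *: f x + f y),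
        injective f,
        (forall x y, f (mulA x y) = mulN (f x) (f y))
      & (forall n, lcs mulN i n <-> exists x, n = f x)].

From HB Require Import structures.
From Stdlib Require Import Classical.
From mathcomp Require Import all_boot all_order all_algebra.
From mathcomp Require Import zify.
Set Implicit Arguments. Unset Strict Implicit. Unset Printing Implicit Defensive.
Import GRing.Theory.
Local Open Scope ring_scope.

(* Suppose A = N^i with N nilpotent Leibniz and i >= 2.  Since A
   is not abelian, some product of two elements of N^i is nonzero, so
   N^(2i) <> 0; let N^(k+1) be the last nonzero term of the lower central
   series (k+1 >= 2i).  The series strictly decreases before vanishing, so
   there is w in N^k \ N^(k+1).  Both N^k and N^(k+1) lie inside N^i = A, and
   since N^a N^b <= N^(a+b) with i >= 2, every element of N^k multiplies A
   into N^(k+2) = 0 on both sides: N^k lies in the center of A.  The center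
   is a line containing a nonzero element z of N^(k+1), so w is a multiple of
   z and lies in N^(k+1), a contradiction. *)

Section LowerCentralSeries.
Variables (K : fieldType) (V : lmodType K) (mul : V -> V -> V).

Lemma lcs_pred j x : lcs mul j.+2 x -> lcs mul j.+1 x.
Proof.
move Em: j.+2 => m h; elim: h j Em => {m x} //.
- move=> j' x y hy IH [|j] [Ej]; first exact: lcs_one.
  by apply: lcs_mul; apply: IH; rewrite Ej.
- by move=> j' j _; apply: lcs_zero.
- by move=> j' x y _ IH1 _ IH2 j Ej; apply: lcs_add; [apply: IH1 | apply: IH2].
- by move=> j' c x _ IH j Ej; apply: lcs_scale; apply: IH.
Qed.

Lemma lcs_antitone n m x : (0 < n)%N -> (n <= m)%N -> lcs mul m x -> lcs mul n x.
Proof.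
move=> n_gt0; elim: m => [|m IH]; first by move: n_gt0; lia.
rewrite leq_eqVlt => /orP[/eqP -> // | ltnm1] h.
case: m IH ltnm1 h => [|m] IH ltnm1 h; first by move: n_gt0 ltnm1; lia.
by apply: IH; [rewrite -ltnS | apply: lcs_pred].
Qed.

(* Stabilisation: if N^j <= N^(j+1) then N^(j+1) <= N^(j+2), because both
   sides are spanned by products x y with y in the previous term. *)
Lemma lcs_stable j : (0 < j)%N -> (forall y, lcs mul j y -> lcs mul j.+1 y) ->
  forall x, lcs mul j.+1 x -> lcs mul j.+2 x.
Proof.
move=> j_gt0 stab x h; move Em: j.+1 h => m h.
elim: h j j_gt0 Em stab => {m x}.
- by move=> x [|j].
- by move=> j' x y hy _ j _ [->] stab; apply: lcs_mul; apply: stab.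
- by move=> j' j _ [->] _; apply: lcs_zero.
- move=> j' x y _ IH1 _ IH2 j j_gt0 Ej stab.
  by apply: lcs_add; [apply: IH1 j_gt0 Ej stab | apply: IH2 j_gt0 Ej stab].
- by move=> j' c x _ IH j j_gt0 Ej stab; apply: lcs_scale; apply: IH j_gt0 Ej stab.
Qed.

Lemma lcs_strict_before_zero j : (0 < j)%N ->
  (forall x, lcs mul j.+2 x -> x = 0) ->
  forall z, z != 0 -> lcs mul j.+1 z ->
  exists w, lcs mul j w /\ ~ lcs mul j.+1 w.
Proof.
move=> j_gt0 vanish z /eqP z0 hz; apply: NNPP => no_w; apply: z0.
apply: vanish; apply: lcs_stable hz => // y hy.
by apply: NNPP => hy'; apply: no_w; exists y.
Qed.

Lemma last_nonzero_term n z : nilpotent_alg mul -> z != 0 -> lcs mul n z ->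
  exists k, [/\ (n <= k)%N, exists2 z', z' != 0 & lcs mul k z'
              & forall x, lcs mul k.+1 x -> x = 0].
Proof.
move=> [t vanish]; move Ed: (t.+1 - n)%N => d.
elim: d n z Ed => [|d IH] n z Ed z0 hz.
  case/eqP: z0; apply: vanish; case: n hz Ed => [|n] hz Ed; first by lia.
  by apply: (lcs_antitone _ _ hz); lia.
case: (classic (forall x, lcs mul n.+1 x -> x = 0)) => [last | /not_all_ex_not [z' hz']].
  by exists n; split=> //; exists z.
have [/eqP z'0 hz'1] : z' <> 0 /\ lcs mul n.+1 z'.
  by split=> [z'0 | ]; apply: NNPP => h; apply: hz' => ?.
have [k [lenk nz vk]] := IH n.+1 z' ltac:(lia) z'0 hz'1.
by exists k; split=> //; lia.
Qed.

Hypothesis leibV : leibniz_alg mul.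

Lemma mul0l z : mul 0 z = 0.
Proof.
case: leibV => linl _ _; have h := linl 1 0 0 z; rewrite !scale1r addr0 in h.
by apply: (@addrI _ (mul 0 z)); rewrite addr0 -h.
Qed.

Lemma mulDl x y z : mul (x + y) z = mul x z + mul y z.
Proof. by case: leibV => linl _ _; have := linl 1 x y z; rewrite !scale1r. Qed.

Lemma mulZl (a : K) x z : mul (a *: x) z = a *: mul x z.
Proof. by case: leibV => linl _ _; rewrite -[a *: x]addr0 linl mul0l addr0. Qed.

Lemma lcs_opp j x : lcs mul j.+1 x -> lcs mul j.+1 (- x).
Proof. by move=> h; rewrite -scaleN1r; apply: lcs_scale. Qed.

(* N^a N^b <= N^(a+b): induction on the derivation of x \in N^a; the case
   x = uv uses the Leibniz identity (uv)y = u(vy) - v(uy). *)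
Lemma lcs_prod a x : lcs mul a x ->
  forall b y, lcs mul b y -> lcs mul (a + b) (mul x y).
Proof.
elim=> {a x}.
- by move=> x b y hy; rewrite add1n; apply: lcs_mul.
- move=> j u v _ IH b y hy.
  have -> : mul (mul u v) y = mul u (mul v y) - mul v (mul u y).
    by case: leibV => _ _ leib; rewrite leib addrK.
  rewrite addSn; apply: lcs_add; first by apply: lcs_mul; apply: IH.
  by apply: lcs_opp; have := IH b.+1 _ (lcs_mul u hy); rewrite addnS.
- by move=> j b y _; rewrite mul0l addSn; apply: lcs_zero.
- move=> j x1 x2 _ IH1 _ IH2 b y hy; rewrite mulDl addSn.
  by apply: lcs_add; rewrite -addSn; [apply: IH1 | apply: IH2].
- move=> j c x _ IH b y hy; rewrite mulZl addSn.
  by apply: lcs_scale; rewrite -addSn; apply: IH.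
Qed.

End LowerCentralSeries.

Lemma nonzero_product (K : fieldType) (V : lmodType K) (mul : V -> V -> V) :
  ~ abelian_alg mul -> exists x y, mul x y != 0.
Proof.
move=> nab; apply: NNPP => h; apply: nab => x y.
by apply: NNPP => /eqP nz; apply: h; exists x, y.
Qed.

Lemma center_line (K : fieldType) (V : lmodType K) (mul : V -> V -> V) :
  center_dim1 mul -> forall u v, central mul u -> central mul v -> v != 0 ->
  exists a : K, u = a *: v.
Proof.
move=> [z _ cz] u v /cz [b ->] /cz [c ->] cz0.
have c0 : c != 0 by apply: contraNneq cz0 => ->; rewrite scale0r.
by exists (b / c); rewrite scalerA mulfVK.
Qed.

Section IsoToLcs.
Variables (K : fieldType) (A : lmodType K) (mulA : A -> A -> A).
Variables (N : lmodType K) (mulN : N -> N -> N) (i : nat) (f : A -> N).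
Hypotheses (leibN : leibniz_alg mulN)
  (f_lin : forall (a : K) x y, f (a *: x + y) = a *: f x + f y)
  (f_inj : injective f) (f_mul : forall x y, f (mulA x y) = mulN (f x) (f y))
  (f_img : forall n, lcs mulN i n <-> exists x, n = f x).

Lemma lin_f0 : f 0 = 0.
Proof.
have h := f_lin 1 0 0; rewrite !scale1r addr0 in h.
by apply: (@addrI _ (f 0)); rewrite addr0 -h.
Qed.

Lemma lin_fZ a x : f (a *: x) = a *: f x.
Proof. by rewrite -[a *: x]addr0 f_lin lin_f0 addr0. Qed.

Lemma lcs_in_image n x : (i <= n)%N -> (0 < i)%N -> lcs mulN n x ->
  exists v, x = f v.
Proof. by move=> lein i_gt0 hx; apply/f_img; apply: (lcs_antitone _ _ hx). Qed.

(* If N^m = 0 and n + i >= m, the preimage of N^n is central in A, since A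
   multiplies N^n into N^(n+i) on both sides. *)
Lemma preimage_central n m v : (0 < m)%N -> (m <= n + i)%N ->
  (forall x, lcs mulN m x -> x = 0) -> lcs mulN n (f v) -> central mulA v.
Proof.
move=> m_gt0 lem vanish hv u.
have inNi : lcs mulN i (f u) by apply/f_img; exists u.
split; apply: f_inj; rewrite f_mul lin_f0; apply: vanish.
  by apply: (lcs_antitone _ lem) => //; apply: lcs_prod.
by apply: (lcs_antitone _ _ (lcs_prod leibN inNi hv)) => //; rewrite addnC.
Qed.

End IsoToLcs.

Theorem mainTheorem15 (K : fieldType) (A : vectType K) (mulA : A -> A -> A) :
  leibniz_alg mulA -> nilpotent_alg mulA -> ~ abelian_alg mulA ->
  center_dim1 mulA ->
  ~ (exists (N : lmodType K) (mulN : N -> N -> N) (i : nat),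
       [/\ leibniz_alg mulN, nilpotent_alg mulN, (2 <= i)%N
         & iso_to_lcs mulA mulN i]).
Proof.
move=> _ _ nab cdim [N [mulN [i [leibN nilN le2i [f [f_lin f_inj f_mul f_img]]]]]].
have f0 := lin_f0 f_lin.
(* N^(2i) contains a nonzero product of two elements of N^i = A. *)
have [x [y xy0]] := nonzero_product nab.
have inNi v : lcs mulN i (f v) by apply/f_img; exists v.
have fxy0 : mulN (f x) (f y) != 0.
  by rewrite -f_mul; apply: contra xy0 => /eqP; rewrite -f0 => /f_inj ->.
have [[|k] [le2ik [z z0 hz] vanish]] :=
  last_nonzero_term nilN fxy0 (lcs_prod leibN (inNi x) (inNi y)).
  by move: le2ik le2i; lia.
have k_gt0 : (0 < k)%N by lia.
have [w [hw nw]] := lcs_strict_before_zero k_gt0 vanish z0 hz.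
have [i_gt0 leik le_z le_w] :
    [/\ (0 < i)%N, (i <= k)%N, (k.+2 <= k.+1 + i)%N & (k.+2 <= k + i)%N].
  by split; lia.
have [z' ez] := lcs_in_image f_img (leqW leik) i_gt0 hz.
have [w' ew] := lcs_in_image f_img leik i_gt0 hw.
subst z w.
have cz := preimage_central leibN f_lin f_inj f_mul f_img (ltn0Sn k.+1)
  le_z vanish hz.
have cw := preimage_central leibN f_lin f_inj f_mul f_img (ltn0Sn k.+1)
  le_w vanish hw.
have z'0 : z' != 0 by apply: contraNneq z0 => ->; rewrite f0.
(* The center is a line, so w' is a multiple of z' and f w' lies in N^(k+1). *)
have [a ea] := center_line cdim cw cz z'0.
by apply: nw; rewrite ea (lin_fZ f_lin); apply: lcs_scale.
Qed.
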